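(* Let $r\ge 2$, $n\ge 1$, $k\ge 1$ be integers and $s:[n]\to\{0,1,\dots,r-1\}$. Let $\mathrm{Supp}(s)=\{i\in[n]: s(i)>0\}$ and let $I\subseteq\mathrm{Supp}(s)$ with $|I|\ge k$. Let $C^I$ be the subcomplex of $C_s(n,k,\dots,k)$ ($k$ repeated $r$ times) induced on the vertices $(A_1,\dots,A_r)$ with $I\subseteq A_1$. Define $s'(i)=s(i)-1$ for $i\in I$ and $s'(i)=s(i)$ for $i\notin I$. Then $C^I$ is homotopy equivalent to $C_{s'}(n,k,\dots,k)$ with $k$ repeated $r-1$ times.
   Context: For $m\ge 1$, $t:[n]\to\{0,\dots,m\}$ and integers $k_1,\dots,k_m\ge 0$, the complex $C_t(n,k_1,\dots,k_m)$ has as vertices the $m$-tuples $(A_1,\dots,A_m)$ of subsets of $[n]$ with $|A_j|\ge k_j$ for all $j$ such that each $x\in[n]$ lies in exactly $t(x)$ of the $A_j$; a set of vertices $\{(A_1^i,\dots,A_m^i)\}_{i\in I}$ is a face iff $|\bigcap_{i\in I}A_j^i|\ge k_j$ for all $j$. Homotopy equivalence refers to geometric realizations. *)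

From HB Require Import structures.
From mathcomp Require Import all_boot all_order all_algebra.
From mathcomp Require Import all_classical all_reals topology.
From mathcomp Require Import Rstruct Rstruct_topology.
From Stdlib Require Import Rdefinitions.

Set Implicit Arguments.
Unset Strict Implicit.
Unset Printing Implicit Defensive.

Import Order.TTheory GRing.Theory Num.Theory.

(* Vertices of C_t(n, k_1, ..., k_m): m-tuples (A_0,...,A_{m-1}) of subsets of
   [n] = 'I_n with |A_j| >= k_j, each x lying in exactly t(x) of the A_j. *)
Definition is_vertex (n m : nat) (t : 'I_n -> nat) (kk : 'I_m -> nat)
  (A : {ffun 'I_m -> {set 'I_n}}) : bool :=
  [forall j, leq (kk j) #|A j|] &&
  [forall x, #|[set j | x \in A j]| == t x].

Definition is_face (n m : nat) (t : 'I_n -> nat) (kk : 'I_m -> nat)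
  (F : {set {ffun 'I_m -> {set 'I_n}}}) : bool :=
  [forall A in F, is_vertex t kk A] &&
  [forall j, leq (kk j) #|\bigcap_(A in F) A j|].

(* Faces of the subcomplex C^I of C_t(n,k_1,...,k_m) induced on the vertices
   with I \subset A_1 (A_1 is the coordinate of index 0). *)
Definition is_face_I (n m : nat) (t : 'I_n -> nat) (kk : 'I_m -> nat)
  (I : {set 'I_n}) (F : {set {ffun 'I_m -> {set 'I_n}}}) : bool :=
  is_face t kk F &&
  [forall A in F, forall j : 'I_m, (val j == 0)%N ==> (I \subset A j)].

Local Open Scope classical_set_scope.
Local Open Scope ring_scope.

(* Geometric realization of a simplicial complex on a finite vertex type V,
   given by its face predicate: points of the standard simplex in R^V whose
   support is a face, with the subspace topology of the product topology. *)
Definition realization (V : finType) (face : {set V} -> bool) : set {ptws V -> R} :=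
  [set x : {ptws V -> R} | (forall v, 0 <= x v) /\ \sum_(v : V) x v = 1 /\
           face [set v | x v != 0]%SET].

Definition homotopic_on (X Y : topologicalType) (A : set X) (B : set Y)
  (f g : X -> Y) : Prop :=
  exists H : R * X -> Y,
    {within `[0%R, 1%R] `*` A, continuous H} /\
    H @` (`[0%R, 1%R] `*` A) `<=` B /\
    (forall x, A x -> H (0, x) = f x) /\
    (forall x, A x -> H (1, x) = g x).

Definition homotopy_equivalent (X Y : topologicalType) (A : set X) (B : set Y)
  : Prop :=
  exists (f : X -> Y) (g : Y -> X),
    {within A, continuous f} /\ f @` A `<=` B /\
    {within B, continuous g} /\ g @` B `<=` A /\
    homotopic_on A A (g \o f) id /\
    homotopic_on B B (f \o g) id.

From HB Require Import structures.
From mathcomp Require Import all_boot all_order all_algebra.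
From mathcomp Require Import all_classical all_reals topology.
From mathcomp Require Import Rstruct Rstruct_topology normedtype.
From Stdlib Require Import Rdefinitions.

Set Implicit Arguments.
Unset Strict Implicit.
Unset Printing Implicit Defensive.

Import Order.TTheory GRing.Theory Num.Theory.

(* Two simplicial maps relate the complexes.  [absorb0] forgets the first
   coordinate A_1 of a vertex of C^I after moving each x in A_1 \ I into the
   first remaining coordinate that misses it (one exists since x lies in
   s(x) < r coordinates); [adjoinI] prepends I to a vertex of C_{s'}.  Then
   absorb0 o adjoinI is the identity, while adjoinI o absorb0 is contiguous to
   the identity: off the first coordinate it only enlarges the A_j, and in the
   first coordinate it gives I, which lies in every A_1 of C^I.  Simplicial maps
   extend linearly to the realizations, and a simplicial map contiguous to the
   identity is homotopic to it along straight segments. *)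

Section SimplicialMaps.
Variables V W : finType.

Definition down_closed (face : {set V} -> bool) : Prop :=
  forall F G : {set V}, G \subset F -> face F -> face G.

Definition simplicial (faceV : {set V} -> bool) (faceW : {set W} -> bool)
    (phi : V -> W) : Prop :=
  forall F, faceV F -> faceW (phi @: F).

Definition contiguous_to_id (face : {set V} -> bool) (psi : V -> V) : Prop :=
  forall F, face F -> face (F :|: psi @: F).

End SimplicialMaps.

Lemma contiguous_to_id_id (V : finType) face (psi : V -> V) :
  psi =1 id -> contiguous_to_id face psi.
Proof. by move=> psi_id F; rewrite (eq_imset _ psi_id) imset_id finset.setUid. Qed.

Lemma is_face_down_closed (n m : nat) (t : 'I_n -> nat) (kk : 'I_m -> nat) :
  down_closed (is_face t kk).
Proof.
move=> F G GF /andP [/forall_inP F_vert /forallP F_cap]; apply/andP; split.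
  by apply/forall_inP => A /(fintype.subsetP GF); apply: F_vert.
apply/forallP => j; apply: leq_trans (F_cap j) _; apply: subset_leq_card.
by apply/bigcapsP => A /(fintype.subsetP GF); apply: finset.bigcap_inf.
Qed.

Lemma is_face_I_ord0 (n m : nat) (t : 'I_n -> nat) (kk : 'I_m.+1 -> nat) I F :
  is_face_I t kk I F = is_face t kk F && [forall A in F, I \subset A ord0].
Proof.
congr (_ && _); apply: eq_forallb => A; congr (_ ==> _).
apply/forallP/idP => [/(_ ord0) // | IA0 j]; apply/implyP => /eqP j0.
by rewrite (_ : j = ord0) //; apply: val_inj.
Qed.

Lemma is_face_I_down_closed (n m : nat) (t : 'I_n -> nat) (kk : 'I_m.+1 -> nat) I :
  down_closed (is_face_I t kk I).
Proof.
move=> F G GF; rewrite !is_face_I_ord0.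
case/andP=> /(is_face_down_closed GF) -> /forall_inP IA0.
by apply/forall_inP => A /(fintype.subsetP GF); apply: IA0.
Qed.

Lemma card_mem_ord0_lift (T : finType) m (A : 'I_m.+1 -> {set T}) x :
  #|[set j | x \in A j]| = (x \in A ord0) + #|[set j : 'I_m | x \in A (lift ord0 j)]|.
Proof.
rewrite -!sum1dep_card big_mkcond big_ord_recl [in RHS]big_mkcond /=.
by case: (x \in A ord0).
Qed.

Definition decr_on (n : nat) (I : {set 'I_n}) (t : 'I_n -> nat) (i : 'I_n) : nat :=
  if i \in I then (t i).-1 else t i.

Section AbsorbFirstCoordinate.
Variables (n m : nat) (s : 'I_n -> nat) (kk : 'I_m.+2 -> nat) (I : {set 'I_n}).
Hypothesis s_lt : forall i, s i < m.+2.
Hypothesis s_gt0_on_I : I \subset [set i | 0 < s i].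
Hypothesis kk0_le_I : kk ord0 <= #|I|.

Let Vertex := {ffun 'I_m.+2 -> {set 'I_n}}.
Let Vertex' := {ffun 'I_m.+1 -> {set 'I_n}}.
Let kk' (j : 'I_m.+1) := kk (lift ord0 j).

Definition free_slot (A : Vertex) (x : 'I_n) : 'I_m.+1 :=
  odflt ord0 [pick j | x \notin A (lift ord0 j)].

Definition absorb0 (A : Vertex) : Vertex' :=
  [ffun j => A (lift ord0 j) :|: [set x in A ord0 :\: I | free_slot A x == j]].

Definition adjoinI (B : Vertex') : Vertex :=
  [ffun j => if unlift ord0 j is Some j' then B j' else I].

Lemma free_slotP (A : Vertex) x :
  #|[set j | x \in A j]| < m.+2 -> x \in A ord0 ->
  x \notin A (lift ord0 (free_slot A x)).
Proof.
rewrite /free_slot card_mem_ord0_lift => + xA0; rewrite xA0 add1n ltnS.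
case: pickP => // all_in.
suff -> : [set j | x \in A (lift ord0 j)] = [set: _] by rewrite cardsT card_ord ltnn.
by apply/setP => j; rewrite !inE; apply/negbNE/negbT/all_in.
Qed.

Lemma mem_absorb0 (A : Vertex) j x :
  (x \in absorb0 A j) =
  (x \in A (lift ord0 j)) || [&& x \in A ord0, x \notin I & free_slot A x == j].
Proof. by rewrite ffunE !inE [(x \notin I) && _]andbC andbA. Qed.

Lemma card_mem_absorb0 (A : Vertex) x :
  #|[set j | x \in A j]| < m.+2 ->
  #|[set j | x \in absorb0 A j]| =
  #|[set j | x \in A (lift ord0 j)]| + ((x \in A ord0) && (x \notin I)).
Proof.
move=> x_lt.
have [/andP [xA0 xI] | x_absorbed] := boolP ((x \in A ord0) && (x \notin I)).
  have -> : [set j | x \in absorb0 A j] =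
            free_slot A x |: [set j | x \in A (lift ord0 j)].
    by apply/setP => j; rewrite !inE mem_absorb0 xA0 xI orbC eq_sym.
  by rewrite cardsU1 inE (free_slotP x_lt xA0) add1n addn1.
rewrite addn0; apply: eq_card => j; rewrite !inE mem_absorb0 andbA.
by rewrite (negbTE x_absorbed) orbF.
Qed.

Lemma adjoinI_ord0 B : adjoinI B ord0 = I.
Proof. by rewrite ffunE unlift_none. Qed.

Lemma adjoinI_lift B j : adjoinI B (lift ord0 j) = B j.
Proof. by rewrite ffunE liftK. Qed.

Lemma absorb0K : cancel adjoinI absorb0.
Proof.
move=> B; apply/ffunP => j; apply/setP => x.
by rewrite mem_absorb0 adjoinI_lift adjoinI_ord0; case: (x \in I); rewrite ?orbF.
Qed.

Lemma absorb0_lift_sub (A : Vertex) j : A (lift ord0 j) \subset absorb0 A j.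
Proof. by rewrite ffunE finset.subsetUl. Qed.

Lemma absorb0_vertex (A : Vertex) :
  is_vertex s kk A -> I \subset A ord0 -> is_vertex (decr_on I s) kk' (absorb0 A).
Proof.
case/andP => /forallP A_big /forallP A_mult IA0; apply/andP; split; apply/forallP.
  by move=> j; apply: leq_trans (A_big _) (subset_leq_card (absorb0_lift_sub A j)).
move=> x; have /eqP sx := A_mult x; rewrite card_mem_absorb0 ?sx //.
move: sx; rewrite card_mem_ord0_lift /decr_on.
case: ifP => [xI | _] <-; last by rewrite andbT addnC.
by rewrite (fintype.subsetP IA0 _ xI) andbF addn0.
Qed.

Lemma adjoinI_vertex B :
  is_vertex (decr_on I s) kk' B -> is_vertex s kk (adjoinI B).
Proof.
case/andP => /forallP B_big /forallP B_mult; apply/andP; split; apply/forallP.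
  move=> j; case: (unliftP ord0 j) => [j'|] ->.
    by rewrite adjoinI_lift; apply: B_big.
  by rewrite adjoinI_ord0.
move=> x; rewrite card_mem_ord0_lift adjoinI_ord0.
rewrite (eq_card (B := [set j | x \in B j])); last first.
  by move=> j; rewrite !inE adjoinI_lift.
rewrite (eqP (B_mult x)) /decr_on; case: ifP => xI //=.
by move: (fintype.subsetP s_gt0_on_I _ xI); rewrite inE add1n => /prednK ->.
Qed.

Lemma is_face_I_intro (F : {set Vertex}) :
  {in F, forall A : Vertex, is_vertex s kk A} ->
  {in F, forall A : Vertex, I \subset A ord0} ->
  (forall j, kk' j <= #|\bigcap_(A in F) A (lift ord0 j)|) ->
  is_face_I s kk I F.
Proof.
move=> F_vert IA0 F_cap; rewrite is_face_I_ord0 /is_face -andbA; apply/and3P; split.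
- exact/forall_inP.
- apply/forallP => j; case: (unliftP ord0 j) => [j'|] ->; first exact: F_cap.
  by apply: leq_trans kk0_le_I (subset_leq_card _); apply/bigcapsP.
- exact/forall_inP.
Qed.

Lemma absorb0_simplicial :
  simplicial (is_face_I s kk I) (is_face (decr_on I s) kk') absorb0.
Proof.
move=> F; rewrite is_face_I_ord0.
case/andP=> /andP [/forall_inP F_vert /forallP F_cap] /forall_inP IA0.
apply/andP; split.
  apply/forall_inP => _ /imsetP [A AF ->].
  by apply: absorb0_vertex; [apply: F_vert | apply: IA0].
apply/forallP => j; apply: leq_trans (F_cap (lift ord0 j)) (subset_leq_card _).
apply/bigcapsP => _ /imsetP [A AF ->].
exact: fintype.subset_trans (finset.bigcap_inf _ AF) (absorb0_lift_sub A j).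
Qed.

Lemma adjoinI_simplicial :
  simplicial (is_face (decr_on I s) kk') (is_face_I s kk I) adjoinI.
Proof.
move=> F /andP [/forall_inP F_vert /forallP F_cap]; apply: is_face_I_intro.
- by move=> _ /imsetP [B BF ->]; apply: adjoinI_vertex; apply: F_vert.
- by move=> _ /imsetP [B BF ->]; rewrite adjoinI_ord0.
- move=> j; apply: leq_trans (F_cap j) (subset_leq_card _).
  apply/bigcapsP => _ /imsetP [B BF ->].
  by rewrite adjoinI_lift; apply: finset.bigcap_inf.
Qed.

Lemma adjoinI_absorb0_contiguous :
  contiguous_to_id (is_face_I s kk I) (adjoinI \o absorb0).
Proof.
move=> F; rewrite [is_face_I _ _ _ F]is_face_I_ord0.
case/andP=> /andP [/forall_inP F_vert /forallP F_cap] /forall_inP IA0.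
apply: is_face_I_intro.
- move=> A /setUP [AF | /imsetP [A' A'F ->]]; first exact: F_vert.
  by apply/adjoinI_vertex/absorb0_vertex; [apply: F_vert | apply: IA0].
- by move=> A /setUP [AF | /imsetP [A' _ ->]]; [apply: IA0 | rewrite /= adjoinI_ord0].
- move=> j; apply: leq_trans (F_cap (lift ord0 j)) (subset_leq_card _).
  apply/bigcapsP => A /setUP [AF | /imsetP [A' A'F ->]]; first exact: finset.bigcap_inf.
  rewrite /= adjoinI_lift.
  exact: fintype.subset_trans (finset.bigcap_inf _ A'F) (absorb0_lift_sub A' j).
Qed.

End AbsorbFirstCoordinate.

Section Realization.
Local Open Scope ring_scope.

Definition push (V W : finType) (phi : V -> W) (x : {ptws V -> R}) : {ptws W -> R} :=
  fun w => \sum_(v | phi v == w) x v.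

Lemma push_ge0 (V W : finType) (phi : V -> W) x :
  (forall v, 0 <= x v) -> forall w, 0 <= push phi x w.
Proof. by move=> x_ge0 w; apply: sumr_ge0. Qed.

Lemma sum_push (V W : finType) (phi : V -> W) x :
  \sum_w push phi x w = \sum_v x v.
Proof. by rewrite /push (partition_big phi predT). Qed.

Lemma support_push (V W : finType) (phi : V -> W) x :
  [set w | push phi x w != 0] \subset phi @: [set v | x v != 0].
Proof.
apply/fintype.subsetP => w; rewrite inE; apply: contraR => w_notin.
apply/eqP/big1 => v /eqP phiv; apply/eqP/negbNE; apply: contra w_notin => xv.
by rewrite -phiv imset_f ?inE.
Qed.

Lemma push_comp (U V W : finType) (phi : V -> W) (psi : U -> V) x :
  push phi (push psi x) = push (phi \o psi) x.
Proof.
apply: funext => w; rewrite /push [RHS](partition_big psi (fun v => phi v == w)) //=.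
apply: eq_bigr => v /eqP phiv; apply: eq_bigl => u.
by apply/idP/andP => [/eqP psiu | [_ ->]//]; rewrite psiu phiv.
Qed.

Definition straight_homotopy (V : finType) (psi : V -> V)
    (p : R * {ptws V -> R}) : {ptws V -> R} :=
  fun v => (1 - p.1) * push psi p.2 v + p.1 * p.2 v.

Lemma support_straight_homotopy (V : finType) (psi : V -> V) x (t : R) :
  [set v | straight_homotopy psi (t, x) v != 0] \subset
  [set v | x v != 0] :|: psi @: [set v | x v != 0].
Proof.
apply/fintype.subsetP => v; rewrite inE /straight_homotopy /= => v_supp.
apply/setUP.
have [xv0|] := eqVneq (x v) 0; last by left; rewrite inE.
right; apply: (fintype.subsetP (support_push psi x)); rewrite inE.
by apply: contraNneq v_supp => ->; rewrite xv0 !mulr0 addr0.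
Qed.

Local Open Scope classical_set_scope.

Lemma continuous_ptws (T : topologicalType) (U : finType)
    (f : T -> {ptws U -> R}) :
  (forall u, continuous (fun t => f t u)) -> continuous f.
Proof.
move=> f_cont t.
have [_ cvg_coords] := @pointwise_cvgP (discrete_topology U) R (f @ t) (f t) _.
by apply: cvg_coords => u; apply: f_cont.
Qed.

Lemma continuous_apply (T : topologicalType) (U : finType)
    (f : T -> {ptws U -> R}) u :
  continuous f -> continuous (fun t => f t u).
Proof.
move=> f_cont t.
exact: (continuous_comp (f_cont t) (@proj_continuous U (fun _ => R) u (f t))).
Qed.

Lemma continuous_lerp (T : topologicalType) (t a b : T -> R) :
  continuous t -> continuous a -> continuous b ->
  continuous (fun p => (1 - t p) * a p + t p * b p).
Proof.
move=> t_cont a_cont b_cont p.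
apply: (@cvgD _ R^o); apply: cvgM; [|exact: a_cont|exact: t_cont|exact: b_cont].
by apply: (@cvgB _ R^o); [exact: cvg_cst | exact: t_cont].
Qed.

Lemma continuous_push (V W : finType) (T : topologicalType) (phi : V -> W)
    (f : T -> {ptws V -> R}) :
  continuous f -> continuous (push phi \o f).
Proof.
move=> f_cont; apply: continuous_ptws => w.
have := @continuous_big R^o V +%R 0 (fun v => phi v == w) add_continuous T
  (index_enum V) (fun v t => f t v).
by apply=> v _; apply: continuous_apply.
Qed.

Lemma continuous_straight_homotopy (V : finType) (psi : V -> V) :
  continuous (straight_homotopy psi).
Proof.
apply: continuous_ptws => v; rewrite /straight_homotopy; apply: continuous_lerp.
- by move=> p; apply: cvg_fst.
- apply: (continuous_apply (f := push psi \o snd)).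
  by apply: continuous_push => p; apply: cvg_snd.
- by apply: continuous_apply => p; apply: cvg_snd.
Qed.

Lemma realization_push (V W : finType) faceV faceW (phi : V -> W) :
  down_closed faceW -> simplicial faceV faceW phi ->
  push phi @` realization faceV `<=` realization faceW.
Proof.
move=> downW phiS _ [x [x_ge0 [x_sum x_face]] <-].
split; first exact: push_ge0.
split; first by rewrite sum_push.
exact: downW (support_push phi x) (phiS _ x_face).
Qed.

Lemma homotopic_push_id (V : finType) face (psi : V -> V) :
  down_closed face -> contiguous_to_id face psi ->
  homotopic_on (realization face) (realization face) (push psi) id.
Proof.
move=> down psiC.
exists (straight_homotopy psi).
split; first exact/continuous_subspaceT/continuous_straight_homotopy.
rewrite /straight_homotopy.
split; last by split=> x _; apply: funext => v /=;
  rewrite ?(subr0, subrr, mul1r, mul0r, addr0, add0r).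
move=> _ [[t x] [/= t01 [x_ge0 [x_sum x_face]]] <-].
move: t01; rewrite in_itv /= => /andP [t_ge0 t_le1].
split; [|split].
- move=> v; apply: addr_ge0; apply: mulr_ge0 => //.
  + by rewrite subr_ge0.
  + exact: push_ge0.
- by rewrite big_split /= -!mulr_sumr sum_push x_sum !mulr1 subrK.
- exact: down (support_straight_homotopy psi x t) (psiC _ x_face).
Qed.

Lemma homotopy_equivalent_simplicial (V W : finType) faceV faceW
    (phi : V -> W) (psi : W -> V) :
  down_closed faceV -> down_closed faceW ->
  simplicial faceV faceW phi -> simplicial faceW faceV psi ->
  contiguous_to_id faceV (psi \o phi) -> contiguous_to_id faceW (phi \o psi) ->
  homotopy_equivalent (realization faceV) (realization faceW).
Proof.
move=> downV downW phiS psiS psiphiC phipsiC.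
exists (push phi), (push psi).
have push_compE (U U' U'' : finType) (f : U' -> U'') (g : U -> U') :
    push f \o push g = push (f \o g) by apply: funext => x; apply: push_comp.
have push_cont (U U' : finType) (A : set {ptws U -> R}) (chi : U -> U') :
    {within A, continuous (push chi)}.
  apply: continuous_subspaceT => x.
  by apply: (@continuous_push _ _ _ chi id) => y; apply: cvg_id.
split; first exact: push_cont.
split; first exact: realization_push.
split; first exact: push_cont.
split; first exact: realization_push.
by rewrite !push_compE; split; apply: homotopic_push_id.
Qed.

End Realization.

Theorem mainTheorem7 (r n k : nat) (s : 'I_n -> nat) (I : {set 'I_n}) :
  (2 <= r)%N -> (1 <= n)%N -> (1 <= k)%N ->
  (forall i, s i < r)%N ->
  I \subset [set i | (0 < s i)%N] ->
  (k <= #|I|)%N ->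
  homotopy_equivalent
    (realization (is_face_I s (fun _ : 'I_r => k) I))
    (realization (is_face (fun i => if i \in I then (s i).-1 else s i)
                          (fun _ : 'I_r.-1 => k))).
Proof.
move=> r_ge2 _ _ s_lt s_gt0_on_I k_le_I.
case: r r_ge2 s_lt => [|[|m]] // _ s_lt.
apply: (homotopy_equivalent_simplicial (phi := absorb0 I) (psi := adjoinI I)).
- exact: is_face_I_down_closed.
- exact: is_face_down_closed.
- exact: absorb0_simplicial.
- exact: adjoinI_simplicial.
- exact: adjoinI_absorb0_contiguous.
- exact/contiguous_to_id_id/absorb0K.
Qed.
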